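(* Let $(\mathscr{E},\mathscr{M})$ be an ordinary prefactorization system on (the underlying ordinary category of) a $\mathscr{V}$-category $\mathscr{B}$ such that each $e\in\mathscr{E}$ is $\mathscr{V}$-orthogonal to each $m\in\mathscr{M}$. Then $(\mathscr{E},\mathscr{M})$ is a $\mathscr{V}$-prefactorization-system on $\mathscr{B}$.
   Context: $\mathscr{V}$ is a closed symmetric monoidal category; ordinary categories are not assumed locally small. For $e:A_1\to A_2$, $m:B_1\to B_2$ in $\mathscr{B}$, $e\downarrow_\mathscr{V} m$ ($\mathscr{V}$-orthogonal) means the square formed by $\mathscr{B}(A_2,m)$, $\mathscr{B}(A_1,m)$, $\mathscr{B}(e,B_1)$, $\mathscr{B}(e,B_2)$ is a pullback in $\mathscr{V}$; ordinary orthogonality $e\downarrow m$ means each commutative square $m\cdot u=v\cdot e$ has a unique diagonal $w$ with $w\cdot e=u$, $m\cdot w=v$. An ordinary prefactorization system is a pair $(\mathscr{E},\mathscr{M})$ where $\mathscr{M}$ is exactly the class of $m$ with $e\downarrow m$ for all $e\in\mathscr{E}$ and $\mathscr{E}$ exactly the class of $e$ with $e\downarrow m$ for all $m\in\mathscr{M}$; a $\mathscr{V}$-prefactorization-system is defined likewise with $\downarrow_\mathscr{V}$. *)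

Set Implicit Arguments.
Unset Strict Implicit.

Record Category : Type := {
  ob :> Type;
  hom : ob -> ob -> Type;
  idm : forall A, hom A A;
  comp : forall A B C, hom B C -> hom A B -> hom A C;
  comp_id_l : forall A B (f : hom A B), comp (idm B) f = f;
  comp_id_r : forall A B (f : hom A B), comp f (idm A) = f;
  comp_assoc : forall A B C D (h : hom C D) (g : hom B C) (f : hom A B),
      comp h (comp g f) = comp (comp h g) f
}.
Arguments idm {_} _.
Arguments comp {_ _ _ _} _ _.
Arguments hom {_} _ _.

Notation "g \o f" := (comp g f) (at level 40, left associativity).

Definition is_pullback (C : Category) (P X Y Z : C)
  (p1 : hom P X) (p2 : hom P Y) (f : hom X Z) (g : hom Y Z) : Prop :=
  f \o p1 = g \o p2 /\
  forall (Q : C) (q1 : hom Q X) (q2 : hom Q Y), f \o q1 = g \o q2 ->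
    exists u : hom Q P, (p1 \o u = q1 /\ p2 \o u = q2) /\
      forall u' : hom Q P, p1 \o u' = q1 -> p2 \o u' = q2 -> u' = u.

Record Monoidal (V : Category) : Type := {
  tens : V -> V -> V;
  tensm : forall A B C D, hom A B -> hom C D -> hom (tens A C) (tens B D);
  tensm_id : forall A C, tensm (idm A) (idm C) = idm (tens A C);
  tensm_comp : forall A B C A' B' C' (g : hom B C) (f : hom A B)
      (g' : hom B' C') (f' : hom A' B'),
      tensm (g \o f) (g' \o f') = tensm g g' \o tensm f f';
  unit : V;
  assoc : forall A B C, hom (tens (tens A B) C) (tens A (tens B C));
  assoc_inv : forall A B C, hom (tens A (tens B C)) (tens (tens A B) C);
  assoc_iso1 : forall A B C, assoc A B C \o assoc_inv A B C = idm _;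
  assoc_iso2 : forall A B C, assoc_inv A B C \o assoc A B C = idm _;
  assoc_nat : forall A A' B B' C C' (f : hom A A') (g : hom B B') (h : hom C C'),
      assoc A' B' C' \o tensm (tensm f g) h = tensm f (tensm g h) \o assoc A B C;
  lunit : forall A, hom (tens unit A) A;
  lunit_inv : forall A, hom A (tens unit A);
  lunit_iso1 : forall A, lunit A \o lunit_inv A = idm _;
  lunit_iso2 : forall A, lunit_inv A \o lunit A = idm _;
  lunit_nat : forall A B (f : hom A B), f \o lunit A = lunit B \o tensm (idm unit) f;
  runit : forall A, hom (tens A unit) A;
  runit_inv : forall A, hom A (tens A unit);
  runit_iso1 : forall A, runit A \o runit_inv A = idm _;
  runit_iso2 : forall A, runit_inv A \o runit A = idm _;
  runit_nat : forall A B (f : hom A B), f \o runit A = runit B \o tensm f (idm unit);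
  pentagon : forall A B C D,
      tensm (idm A) (assoc B C D) \o assoc A (tens B C) D \o tensm (assoc A B C) (idm D)
      = assoc A B (tens C D) \o assoc (tens A B) C D;
  triangle : forall A B,
      tensm (idm A) (lunit B) \o assoc A unit B = tensm (runit A) (idm B)
}.
Arguments tens {V} _ _ _.
Arguments tensm {V} _ {A B C D} _ _.
Arguments unit {V} _.
Arguments assoc {V} _ _ _ _.
Arguments lunit {V} _ _.
Arguments lunit_inv {V} _ _.
Arguments runit {V} _ _.
Arguments runit_inv {V} _ _.

Record Symmetric (V : Category) (VM : Monoidal V) : Type := {
  braid : forall A B, hom (tens VM A B) (tens VM B A);
  braid_nat : forall A A' B B' (f : hom A A') (g : hom B B'),
      tensm VM g f \o braid A B = braid A' B' \o tensm VM f g;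
  braid_invol : forall A B, braid B A \o braid A B = idm _;
  hexagon : forall A B C,
      assoc VM B C A \o braid A (tens VM B C) \o assoc VM A B C
      = tensm VM (idm B) (braid A C) \o assoc VM B A C \o tensm VM (braid A B) (idm C)
}.

Record Closed (V : Category) (VM : Monoidal V) : Type := {
  ihom : V -> V -> V;
  ev : forall Y Z, hom (tens VM (ihom Y Z) Y) Z;
  curry : forall X Y Z, hom (tens VM X Y) Z -> hom X (ihom Y Z);
  curry_ev : forall X Y Z (f : hom (tens VM X Y) Z),
      ev Y Z \o tensm VM (curry f) (idm Y) = f;
  curry_uniq : forall X Y Z (f : hom (tens VM X Y) Z) (g : hom X (ihom Y Z)),
      ev Y Z \o tensm VM g (idm Y) = f -> g = curry f
}.

Record VCategory (V : Category) (VM : Monoidal V) : Type := {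
  vob :> Type;
  vhom : vob -> vob -> V;
  vcomp : forall A B C, hom (tens VM (vhom B C) (vhom A B)) (vhom A C);
  vid : forall A, hom (unit VM) (vhom A A);
  vcomp_assoc : forall A B C D,
      vcomp A B D \o tensm VM (vcomp B C D) (idm (vhom A B))
      = vcomp A C D \o tensm VM (idm (vhom C D)) (vcomp A B C) \o assoc VM _ _ _;
  vcomp_id_l : forall A B,
      vcomp A B B \o tensm VM (vid B) (idm (vhom A B)) = lunit VM (vhom A B);
  vcomp_id_r : forall A B,
      vcomp A A B \o tensm VM (idm (vhom A B)) (vid A) = runit VM (vhom A B)
}.
Arguments vhom {V VM} _ _ _.
Arguments vcomp {V VM} _ _ _ _.
Arguments vid {V VM} _ _.

Section Underlying.
Context {V : Category} {VM : Monoidal V} (B : VCategory VM).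

Definition hom0 (A A' : B) : Type := hom (unit VM) (vhom B A A').

Definition comp0 {A1 A2 A3 : B} (g : hom0 A2 A3) (f : hom0 A1 A2) : hom0 A1 A3 :=
  vcomp B A1 A2 A3 \o tensm VM g f \o lunit_inv VM (unit VM).

Definition id0 (A : B) : hom0 A A := vid B A.

Definition postV (X : B) {B1 B2 : B} (m : hom0 B1 B2) :
  hom (vhom B X B1) (vhom B X B2) :=
  vcomp B X B1 B2 \o tensm VM m (idm _) \o lunit_inv VM _.

Definition preV {A1 A2 : B} (e : hom0 A1 A2) (Y : B) :
  hom (vhom B A2 Y) (vhom B A1 Y) :=
  vcomp B A1 A2 Y \o tensm VM (idm _) e \o runit_inv VM _.

Definition orth {A1 A2 B1 B2 : B} (e : hom0 A1 A2) (m : hom0 B1 B2) : Prop :=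
  forall (u : hom0 A1 B1) (v : hom0 A2 B2), comp0 m u = comp0 v e ->
    exists w : hom0 A2 B1, (comp0 w e = u /\ comp0 m w = v) /\
      forall w' : hom0 A2 B1, comp0 w' e = u -> comp0 m w' = v -> w' = w.

(** V-orthogonality e ↓_V m: the square
      B(A2,B1) --B(A2,m)--> B(A2,B2)
         |B(e,B1)              |B(e,B2)
      B(A1,B1) --B(A1,m)--> B(A1,B2)
    is a pullback in V. *)
Definition vorth {A1 A2 B1 B2 : B} (e : hom0 A1 A2) (m : hom0 B1 B2) : Prop :=
  is_pullback (postV A2 m) (preV e B1) (preV e B2) (postV A1 m).

Definition morclass := forall A A' : B, hom0 A A' -> Prop.

Definition prefactorization (E M : morclass) : Prop :=
  (forall (B1 B2 : B) (m : hom0 B1 B2),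
      M B1 B2 m <-> forall (A1 A2 : B) (e : hom0 A1 A2), E A1 A2 e -> orth e m) /\
  (forall (A1 A2 : B) (e : hom0 A1 A2),
      E A1 A2 e <-> forall (B1 B2 : B) (m : hom0 B1 B2), M B1 B2 m -> orth e m).

Definition vprefactorization (E M : morclass) : Prop :=
  (forall (B1 B2 : B) (m : hom0 B1 B2),
      M B1 B2 m <-> forall (A1 A2 : B) (e : hom0 A1 A2), E A1 A2 e -> vorth e m) /\
  (forall (A1 A2 : B) (e : hom0 A1 A2),
      E A1 A2 e <-> forall (B1 B2 : B) (m : hom0 B1 B2), M B1 B2 m -> vorth e m).

End Underlying.

(* Evaluating the pullback square defining e ↓_V m at global elements
   I → B(A2,B2) and I → B(A1,B1) recovers exactly the ordinary lifting problems
   of e against m in B_0, so V-orthogonality implies ordinary orthogonality.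
   Hence the orthogonality classes of a prefactorization system whose members
   are pairwise V-orthogonal are unchanged when ↓ is replaced by ↓_V. *)


Section MonoidalCoherence.
Context {V : Category} (VM : Monoidal V).

Lemma comp_cancel_r {X Y Z : V} {i : hom X Y} {j : hom Y X} {f g : hom Y Z} :
  i \o j = idm _ -> f \o i = g \o i -> f = g.
Proof.
  intros Hij E.
  rewrite <- (comp_id_r f), <- (comp_id_r g), <- Hij, !comp_assoc, E.
  reflexivity.
Qed.

Lemma comp_cancel_l {X Y Z : V} {i : hom Y Z} {j : hom Z Y} {f g : hom X Y} :
  j \o i = idm _ -> i \o f = i \o g -> f = g.
Proof.
  intros Hji E.
  rewrite <- (comp_id_l f), <- (comp_id_l g), <- Hji, <- !comp_assoc, E.
  reflexivity.
Qed.

Lemma tensm_idl_inj (A A' : V) (f g : hom A A') :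
  tensm VM (idm (unit VM)) f = tensm VM (idm (unit VM)) g -> f = g.
Proof.
  intros E.
  apply (comp_cancel_r (lunit_iso1 VM A)).
  rewrite !lunit_nat, E.
  reflexivity.
Qed.

Lemma tensm_idr_inj (A A' : V) (f g : hom A A') :
  tensm VM f (idm (unit VM)) = tensm VM g (idm (unit VM)) -> f = g.
Proof.
  intros E.
  apply (comp_cancel_r (runit_iso1 VM A)).
  rewrite !runit_nat, E.
  reflexivity.
Qed.

Lemma tensm_id_comp_r (A A' C D D' : V) (f : hom A A') (g : hom C D) (h : hom D D') :
  tensm VM (idm A') h \o tensm VM f g = tensm VM f (h \o g).
Proof. rewrite <- tensm_comp, comp_id_l. reflexivity. Qed.

(* Kelly's lemma: derived from the pentagon and the triangle after tensoring
   with I on the left and precomposing with an isomorphism. *)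
Lemma lunit_tens_assoc (A C : V) :
  lunit VM (tens VM A C) \o assoc VM (unit VM) A C = tensm VM (lunit VM A) (idm C).
Proof.
  apply tensm_idl_inj.
  set (P := assoc VM (unit VM) (tens VM (unit VM) A) C \o tensm VM (assoc VM (unit VM) (unit VM) A) (idm C)).
  set (Q := tensm VM (assoc_inv VM (unit VM) (unit VM) A) (idm C) \o assoc_inv VM (unit VM) (tens VM (unit VM) A) C).
  apply (comp_cancel_r (i := P) (j := Q)).
  { unfold P, Q.
    rewrite <- !comp_assoc, (comp_assoc (tensm VM _ _) (tensm VM _ _)).
    rewrite <- tensm_comp, assoc_iso1, comp_id_l, tensm_id, comp_id_l, assoc_iso1.
    reflexivity. }
  transitivity (assoc VM (unit VM) A C \o tensm VM (tensm VM (runit VM (unit VM)) (idm A)) (idm C)).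
  - unfold P.
    rewrite <- (tensm_id_comp_r _ _ _ _ _ (idm (unit VM)) (assoc VM (unit VM) A C) (lunit VM (tens VM A C))).
    rewrite <- !comp_assoc, (comp_assoc (tensm VM (idm (unit VM)) (assoc VM (unit VM) A C))),
      (pentagon VM (unit VM) (unit VM) A C).
    rewrite comp_assoc, (triangle VM (unit VM) (tens VM A C)), <- tensm_id, assoc_nat.
    reflexivity.
  - unfold P.
    rewrite comp_assoc, <- assoc_nat, <- comp_assoc, <- tensm_comp, comp_id_l, triangle.
    reflexivity.
Qed.

Lemma lunit_unit : lunit VM (unit VM) = runit VM (unit VM).
Proof.
  assert (Hlunit_tens : lunit VM (tens VM (unit VM) (unit VM)) = tensm VM (idm (unit VM)) (lunit VM (unit VM))).
  { apply (comp_cancel_l (lunit_iso2 VM (unit VM))).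
    apply lunit_nat. }
  apply tensm_idr_inj.
  rewrite <- lunit_tens_assoc, Hlunit_tens.
  apply triangle.
Qed.

Lemma lunit_inv_unit : lunit_inv VM (unit VM) = runit_inv VM (unit VM).
Proof.
  rewrite <- (comp_id_r (lunit_inv VM _)), <- (runit_iso1 VM (unit VM)).
  rewrite comp_assoc, <- lunit_unit, lunit_iso2, comp_id_l.
  reflexivity.
Qed.

Lemma lunit_inv_nat (A A' : V) (f : hom A A') :
  lunit_inv VM A' \o f = tensm VM (idm (unit VM)) f \o lunit_inv VM A.
Proof.
  apply (comp_cancel_l (lunit_iso2 VM A')).
  rewrite comp_assoc, lunit_iso1, comp_id_l, comp_assoc, <- lunit_nat,
    <- comp_assoc, lunit_iso1, comp_id_r.
  reflexivity.
Qed.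

Lemma runit_inv_nat (A A' : V) (f : hom A A') :
  runit_inv VM A' \o f = tensm VM f (idm (unit VM)) \o runit_inv VM A.
Proof.
  apply (comp_cancel_l (runit_iso2 VM A')).
  rewrite comp_assoc, runit_iso1, comp_id_l, comp_assoc, <- runit_nat,
    <- comp_assoc, runit_iso1, comp_id_r.
  reflexivity.
Qed.

End MonoidalCoherence.

Section Orthogonality.
Context {V : Category} {VM : Monoidal V} (B : VCategory VM).

Lemma postV_comp0 (X B1 B2 : B) (m : hom0 B1 B2) (w : hom0 X B1) :
  postV X m \o w = comp0 m w.
Proof.
  unfold postV, comp0.
  rewrite <- comp_assoc, lunit_inv_nat, comp_assoc, <- (comp_assoc _ (tensm VM m _)).
  rewrite <- tensm_comp, comp_id_l, comp_id_r.
  reflexivity.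
Qed.

(* B(e, Y) is built with the right unitor while comp0 uses the left one; they
   agree on the unit object by coherence. *)
Lemma preV_comp0 (A1 A2 Y : B) (e : hom0 A1 A2) (w : hom0 A2 Y) :
  preV e Y \o w = comp0 w e.
Proof.
  unfold preV, comp0.
  rewrite <- comp_assoc, runit_inv_nat, comp_assoc, <- (comp_assoc _ (tensm VM _ e)).
  rewrite <- tensm_comp, comp_id_l, comp_id_r, lunit_inv_unit.
  reflexivity.
Qed.

Lemma vorth_orth (A1 A2 B1 B2 : B) (e : hom0 A1 A2) (m : hom0 B1 B2) :
  vorth e m -> orth e m.
Proof.
  intros [_ Hpullback] u v Huv.
  destruct (Hpullback (unit VM) v u) as [w [[Hwv Hwu] Hw_uniq]].
  { rewrite preV_comp0, postV_comp0. symmetry. exact Huv. }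
  rewrite postV_comp0 in Hwv. rewrite preV_comp0 in Hwu.
  exists w. split; [split; assumption |].
  intros w' Hw'u Hw'v.
  apply Hw_uniq; [rewrite postV_comp0 | rewrite preV_comp0]; assumption.
Qed.

End Orthogonality.

Theorem proposition5p1 (V : Category) (VM : Monoidal V)
  (VS : Symmetric VM) (VC : Closed VM) (B : VCategory VM)
  (E M : morclass B) :
  prefactorization E M ->
  (forall (A1 A2 B1 B2 : B) (e : hom0 A1 A2) (m : hom0 B1 B2),
      E A1 A2 e -> M B1 B2 m -> vorth e m) ->
  vprefactorization E M.
Proof.
  intros [HM HE] HEM. split.
  - intros B1 B2 m. split.
    + intros Hm A1 A2 e He. exact (HEM _ _ _ _ e m He Hm).
    + intros Hvorth. apply HM. intros A1 A2 e He. apply vorth_orth, Hvorth, He.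
  - intros A1 A2 e. split.
    + intros He B1 B2 m Hm. exact (HEM _ _ _ _ e m He Hm).
    + intros Hvorth. apply HE. intros B1 B2 m Hm. apply vorth_orth, Hvorth, Hm.
Qed.
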